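(* Let $(a,b)\in\mathbb{N}^2$ with $a\ge 2$, and let $\ell$ be a prime with $\ell>\max(a,b)$. Write the base-$a$ expansion of $\ell$ as \[ \ell = a_d a^{d-1}+a_{d-1}a^{d-2}+\cdots+a_2 a+a_1,\qquad 0\le a_i\le a-1 \text{ for all } i, \] and define \[ \mathcal{P}(x):=\frac{x\,b}{\ell\,a}\left(a_d x^{d-1}+a_{d-1}x^{d-2}+\cdots+a_1\right). \] Then $\mathcal{P}(a)=b$, i.e. $(a,b)$ lies on the curve $y=\mathcal{P}(x)$, and there is no lattice point on the portion of this curve joining $(0,0)$ to $(a,b)$; that is, for every integer $t$ with $0<t<a$, $\mathcal{P}(t)\notin\mathbb{Z}$.
   Context: $\mathbb{N}$ denotes the positive integers. The $a_i$ are the base-$a$ digits of $\ell$ (with $a_1$ the units digit). *)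

From mathcomp Require Import all_boot all_order all_algebra.
Set Implicit Arguments. Unset Strict Implicit. Unset Printing Implicit Defensive.
Import Order.TTheory GRing.Theory Num.Theory.
Local Open Scope ring_scope.

Definition ndigits (a n : nat) : nat := (trunc_log a n).+1.

(* The i-th base-a digit of n, 0-indexed from the units digit:
   digit a n i = a_{i+1} in the paper's notation. *)
Definition digit (a n i : nat) : nat := (n %/ a ^ i) %% a.

Definition Pcurve (a b l : nat) (x : rat) : rat :=
  (x * b%:R) / (l%:R * a%:R) *
  \sum_(i < ndigits a l) (digit a l i)%:R * x ^+ i.

From mathcomp Require Import all_boot all_order all_algebra zify.
Import Order.TTheory GRing.Theory Num.Theory.

(* Write [S t] for the base-[a] digit polynomial of [l] evaluated at [t], so
   that [P t = t b S t / (l a)] and [S a = l].  For [0 < t < a] the digits give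
   [0 < S t < S a = l], and [0 < t, b < l]; so the prime [l] does not divide
   [t b S t], let alone [l a], and [P t] is not an integer. *)

Definition digit_eval (a n t : nat) : nat :=
  \sum_(i < ndigits a n) digit a n i * t ^ i.

Lemma sum_digits_modn (a n k : nat) :
  \sum_(i < k) digit a n i * a ^ i = n %% a ^ k.
Proof.
elim: k => [|k IHk]; first by rewrite big_ord0 expn0 modn1.
rewrite big_ord_recr /= IHk /digit.
rewrite modn_divl -expnS [RHS](divn_eq _ (a ^ k)) addnC.
by rewrite modn_dvdm // dvdn_exp2l.
Qed.

Section DigitPolynomial.

Variables a n : nat.
Hypothesis a_gt1 : (1 < a)%N.

Lemma digit_eval_base : digit_eval a n a = n.
Proof. by rewrite /digit_eval sum_digits_modn modn_small // trunc_log_ltn. Qed.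

Lemma digit_top_gt0 : (0 < n)%N -> (0 < digit a n (trunc_log a n))%N.
Proof.
move=> n_gt0; rewrite /digit modn_small; last first.
  by rewrite ltn_divLR ?expn_gt0 ?(ltnW a_gt1) // -expnS trunc_log_ltn.
by rewrite divn_gt0 ?expn_gt0 ?(ltnW a_gt1) // trunc_logP.
Qed.

Lemma digit_eval_gt0 t : (0 < n)%N -> (0 < t)%N -> (0 < digit_eval a n t)%N.
Proof.
move=> n_gt0 t_gt0; rewrite /digit_eval /ndigits big_ord_recr /=.
by rewrite ltn_addl // muln_gt0 digit_top_gt0 // expn_gt0 t_gt0.
Qed.

Lemma digit_eval_ltn t : (a <= n)%N -> (t < a)%N -> (digit_eval a n t < n)%N.
Proof.
move=> le_a_n lt_t_a; rewrite -[X in (_ < X)%N]digit_eval_base.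
have top_gt0 : (0 < trunc_log a n)%N by rewrite trunc_log_gt0 a_gt1; lia.
rewrite /digit_eval /ndigits !big_ord_recr /= -addnS leq_add //.
  apply: leq_sum => i _; rewrite leq_mul2l; apply/orP; right.
  by case: (nat_of_ord i) => [|i']; rewrite // leq_exp2r // ltnW.
rewrite ltn_mul2l ltn_exp2r // lt_t_a andbT digit_top_gt0 //.
exact: leq_trans (ltnW a_gt1) le_a_n.
Qed.

End DigitPolynomial.

Local Open Scope ring_scope.

Lemma Pcurve_digit_eval (a b l t : nat) :
  Pcurve a b l t%:R = (t * b * digit_eval a l t)%N%:R / (l * a)%N%:R.
Proof.
rewrite /Pcurve /digit_eval !natrM natr_sum mulrAC; congr (_ * _ / _).
by apply: eq_bigr => i _; rewrite natrM natrX.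
Qed.

Lemma ratio_nat_Nint (m d : nat) :
  (0 < d)%N -> ~~ (d %| m)%N -> ~ exists z : int, m%:R / d%:R = z%:~R :> rat.
Proof.
move=> d_gt0 /negP d_Ndvd [z mdz]; apply: d_Ndvd.
change (d%:Z %| m%:Z)%Z; apply/dvdzP; exists z; apply: (@intr_inj rat).
by rewrite intrM -mdz divfK // pnatr_eq0 -lt0n.
Qed.

Theorem theorem2p1 (a b l : nat) :
  (2 <= a)%N -> (0 < b)%N -> prime l -> (maxn a b < l)%N ->
  Pcurve a b l a%:R = b%:R /\
  (forall t : nat, (0 < t < a)%N ->
     ~ exists z : int, Pcurve a b l t%:R = z%:~R).
Proof.
move=> a_gt1 b_gt0 l_prime; rewrite gtn_max => /andP[lt_a_l lt_b_l].
have a_gt0 : (0 < a)%N by apply: ltnW.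
have l_gt0 : (0 < l)%N by apply: leq_trans lt_a_l.
split.
  rewrite Pcurve_digit_eval digit_eval_base // mulnAC [(l * a)%N]mulnC natrM.
  by rewrite mulrAC divff ?mul1r // pnatr_eq0 -lt0n muln_gt0 a_gt0.
move=> t /andP[t_gt0 lt_t_a].
have lt_t_l : (t < l)%N by apply: ltn_trans lt_a_l.
have l_Ndvd : ~~ (l %| t * b * digit_eval a l t)%N.
  rewrite !Euclid_dvdM // !negb_or !gtnNdvd ?digit_eval_gt0 ?digit_eval_ltn //.
  exact: ltnW.
rewrite Pcurve_digit_eval; apply: ratio_nat_Nint; first by rewrite muln_gt0 l_gt0.
exact: contra (dvdn_trans (dvdn_mulr a (dvdnn l))) l_Ndvd.
Qed.
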